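(* Let $\mathcal{Y}_c,\mathcal{Y}$ be output alphabets with $\{0,1,\dots,\alpha\}\subseteq\mathcal{Y}_c\subseteq\mathcal{Y}\subseteq\mathbb{Z}$. Then there exists a function $F_n:\mathcal{Y}^n\to\mathcal{Y}_c^n$ (not depending on $s_0$ or $\mathbf{x}$) such that for every $(s_0,\mathbf{x})\in\mathcal{S}\times\mathcal{X}^n$ and every $\mathbf{y}\in\mathcal{Y}^n(s_0,\mathbf{x})$ we have $F_n(\mathbf{y})\in\mathcal{Y}_c^n(s_0,\mathbf{x})$.
   Context: Fix integers $\alpha\ge 1$ (maximal consumption per step), $\beta\ge 0$ (battery capacity), and $n\ge 1$. Let $\mathcal{X}=\{0,1,\dots,\alpha\}$ and $\mathcal{S}=\{0,1,\dots,\beta\}$. For an initial battery state $s_0\in\mathcal{S}$, a consumption sequence $\mathbf{x}=(x_0,\dots,x_{n-1})\in\mathcal{X}^n$ and a request sequence $\mathbf{y}=(y_0,\dots,y_{n-1})\in\mathbb{Z}^n$, the battery states are $s_i=s_0+\sum_{k=0}^{i-1}y_k-\sum_{k=0}^{i-1}x_k$ for $i=0,1,\dots,n$. For an output alphabet $\mathcal{Y}\subseteq\mathbb{Z}$, the set of feasible requests is $\mathcal{Y}^n(s_0,\mathbf{x})=\{\mathbf{y}\in\mathcal{Y}^n: s_i\in\{0,\dots,\beta\}\text{ for all } i=0,\dots,n\}$. *)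

From HB Require Import structures.
From mathcomp Require Import all_boot all_order all_algebra.
Set Implicit Arguments. Unset Strict Implicit. Unset Printing Implicit Defensive.
Import Order.TTheory GRing.Theory Num.Theory.
Local Open Scope ring_scope.

Definition bstate (n : nat) (s0 : int) (x y : n.-tuple int) (i : nat) : int :=
  s0 + \sum_(k < n | (k < i)%N) tnth y k - \sum_(k < n | (k < i)%N) tnth x k.

Definition in_S (beta : nat) (s0 : int) : Prop := 0 <= s0 <= beta%:Z.

Definition in_Xn (alpha n : nat) (x : n.-tuple int) : Prop :=
  forall k : 'I_n, 0 <= tnth x k <= alpha%:Z.

Definition in_alph (n : nat) (Y : pred int) (y : n.-tuple int) : Prop :=
  forall k : 'I_n, Y (tnth y k).

Definition feasible (beta n : nat) (Y : pred int) (s0 : int) (x y : n.-tuple int)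
  : Prop :=
  in_alph Y y /\
  forall i : nat, (i <= n)%N -> 0 <= bstate s0 x y i <= beta%:Z.

From HB Require Import structures.
From mathcomp Require Import all_boot all_order all_algebra.
From mathcomp Require Import zify.
Import Order.TTheory GRing.Theory Num.Theory.
Local Open Scope ring_scope.

(* The compressor F replays the requests y while keeping a
   "debt" d_i, the amount by which the battery driven by F(y) lags behind
   the battery driven by y.  At step i it requests y_i + d_i clamped into
   [0, alpha]; this only depends on y, never on s0 or x, and the clamped
   value lies in {0,...,alpha} which is contained in Yc.
   Feasibility rests on one arithmetic fact (clamp_step): if the original
   battery reaches a valid level t - x after the request and consumption x,
   then a battery at any valid level s' which requests clamp (t - s'),
   i.e. moves towards t by at most alpha, also stays valid after consuming x.
   Since the state under F(y) is the original state minus the debt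
   (bstate_compress), an induction on the step index with clamp_step proves
   that F(y) keeps the battery within {0,...,beta}. *)

Definition clamp (alpha : nat) (a : int) : int :=
  if a < 0 then 0 else if alpha%:Z < a then alpha%:Z else a.

Lemma clamp_range (alpha : nat) (a : int) : 0 <= clamp alpha a <= alpha%:Z.
Proof. by rewrite /clamp; case: ifP => ?; [|case: ifP => ?]; lia. Qed.

Lemma clamp_step (alpha beta : nat) (s' t x : int) :
  0 <= s' <= beta%:Z -> 0 <= x <= alpha%:Z -> 0 <= t - x <= beta%:Z ->
  0 <= s' + clamp alpha (t - s') - x <= beta%:Z.
Proof. by rewrite /clamp; case: ifP => ?; [|case: ifP => ?]; lia. Qed.

Section Compressor.

Variable alpha : nat.

(* Debt after the first i steps: the difference between the total amount
   requested by y and by its compression. *)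
Fixpoint debt (y : seq int) (i : nat) : int :=
  match i with
  | 0 => 0
  | j.+1 => debt y j + nth 0 y j - clamp alpha (nth 0 y j + debt y j)
  end.

Definition compress {n : nat} (y : n.-tuple int) : n.-tuple int :=
  [tuple clamp alpha (tnth y k + debt y k) | k < n].

Lemma nth_compress (n : nat) (y : n.-tuple int) (k : nat) : (k < n)%N ->
  nth 0 (compress y) k = clamp alpha (nth 0 y k + debt y k).
Proof.
move=> hk; have := tnth_nth 0 (compress y) (Ordinal hk).
by rewrite tnth_mktuple /= (tnth_nth 0) /= => <-.
Qed.

End Compressor.

Lemma sum_prefix (n i : nat) (t : n.-tuple int) : (i <= n)%N ->
  \sum_(k < n | (k < i)%N) tnth t k = \sum_(k < i) nth 0 t k.
Proof.
move=> hi; rewrite (big_ord_widen n (fun k => nth 0 (tval t) k) hi).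
by apply: eq_bigr => k _; rewrite (tnth_nth 0).
Qed.

Lemma bstate0 (n : nat) (s0 : int) (x y : n.-tuple int) : bstate s0 x y 0 = s0.
Proof. by rewrite /bstate !sum_prefix // !big_ord0 subr0 addr0. Qed.

Lemma bstateS (n : nat) (s0 : int) (x y : n.-tuple int) (i : nat) : (i < n)%N ->
  bstate s0 x y i.+1 = bstate s0 x y i + nth 0 y i - nth 0 x i.
Proof.
move=> hi; rewrite /bstate !sum_prefix ?(ltnW hi) // !big_ord_recr /=.
by set a := \sum_(k < i) _; set b := \sum_(k < i) _; lia.
Qed.

Lemma bstate_compress (alpha n : nat) (s0 : int) (x y : n.-tuple int) (i : nat) :
  (i <= n)%N ->
  bstate s0 x (compress alpha y) i = bstate s0 x y i - debt alpha y i.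
Proof.
elim: i => [|i IH] hi; first by rewrite !bstate0 subr0.
rewrite !bstateS // IH ?(ltnW hi) // nth_compress //=.
by set c := clamp _ _; set s := bstate _ _ _ _; lia.
Qed.

Lemma compress_states (alpha beta n : nat) (s0 : int) (x y : n.-tuple int) :
  in_Xn alpha x -> (forall i, (i <= n)%N -> 0 <= bstate s0 x y i <= beta%:Z) ->
  forall i, (i <= n)%N -> 0 <= bstate s0 x (compress alpha y) i <= beta%:Z.
Proof.
move=> hx hy; elim=> [|i IH] hi; first by have := hy 0%N hi; rewrite !bstate0.
have hxi : 0 <= nth 0 x i <= alpha%:Z by have := hx (Ordinal hi); rewrite (tnth_nth 0).
have hnext := hy _ hi; rewrite bstateS // in hnext.
rewrite bstateS // nth_compress //.
have -> : nth 0 y i + debt alpha y i =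
          (bstate s0 x y i + nth 0 y i) - bstate s0 x (compress alpha y) i.
  by rewrite bstate_compress ?(ltnW hi) //; lia.
exact: clamp_step (IH (ltnW hi)) hxi hnext.
Qed.

Theorem lemma2 (alpha beta n : nat) (Yc Y : pred int) :
  (1 <= alpha)%N ->
  (forall z : int, 0 <= z <= alpha%:Z -> Yc z) ->
  (forall z : int, Yc z -> Y z) ->
  exists F : n.-tuple int -> n.-tuple int,
    (forall y, in_alph Y y -> in_alph Yc (F y)) /\
    (forall (s0 : int) (x y : n.-tuple int),
        in_S beta s0 -> in_Xn alpha x ->
        feasible beta Y s0 x y -> feasible beta Yc s0 x (F y)).
Proof.
move=> _ hYc _; exists (compress alpha).
have hA y : in_alph Yc (compress alpha y).
  by move=> k; rewrite tnth_mktuple; apply/hYc/clamp_range.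
split=> // s0 x y _ hx [_ hy]; split=> //.
exact: compress_states.
Qed.
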